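(* Let $R=\bigoplus_{s\in S}R_s$ be an $S$-graded ring inducing $S$, where $S$ is cancellative. Then $R$ is graded von Neumann regular if and only if for every $x\in H_R$ there exists $y\in H_R$ such that $x=xyx$.
   Context: Rings are associative, not necessarily unital. Let $S$ be a partial groupoid (set with partial binary operation) and $R$ a ring with additive subgroups $R_s$ ($s\in S$) such that $R=\bigoplus_{s\in S}R_s$, $R_sR_t\subseteq R_{st}$ whenever $st$ is defined, and $R_sR_t\neq 0$ implies $st$ is defined; $R$ is then called an $S$-graded ring inducing $S$. Convention: $S$ contains an element $0$ with $R_0=0$, $S\setminus\{0\}=\{s: R_s\neq 0\}$, and $S$ is made a groupoid by setting $st=0$ when $st$ is undefined and $s0=0s=0$. $H_R=\bigcup_{s\in S}R_s$ is the set of homogeneous elements. $S$ is cancellative if for $s,t,u\in S$ each of $0\neq su=tu$ and $0\neq us=ut$ implies $s=t$. $R$ is graded von Neumann regular if $x\in xRx$ for every $x\in H_R$. *)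

(* Rings are associative, not necessarily unital: the additive
   group is a zmodType and the multiplication is an explicit associative,
   biadditive operation (no unit required). *)
From mathcomp Require Import all_boot all_algebra.
Set Implicit Arguments. Unset Strict Implicit. Unset Printing Implicit Defensive.
Import GRing.Theory.
Local Open Scope ring_scope.

Definition nu_ring (R : zmodType) (mul : R -> R -> R) : Prop :=
  associative mul /\ left_distributive mul +%R /\ right_distributive mul +%R.

Definition add_subgroup (R : zmodType) (A : R -> Prop) : Prop :=
  A 0 /\ forall x y, A x -> A y -> A (x - y).

(* S-graded ring inducing S, with the paper's convention: S carries a total
   binary operation [op] and a distinguished element [z] (the "0" of S) with
   s z = z s = z, R_z = 0, R_s <> 0 for s <> z, and R_s R_t ⊆ R_(st)
   (for st undefined in the original partial groupoid, st = z).
   R = ⊕_s R_s is an internal direct sum: every element is a finite sum of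
   homogeneous elements, and homogeneous components of pairwise distinct
   degrees summing to 0 are all 0. *)
Definition graded_ring_inducing (R : zmodType) (mul : R -> R -> R)
  (S : Type) (op : S -> S -> S) (z : S) (Rs : S -> R -> Prop) : Prop :=
  nu_ring mul /\
  (forall s, add_subgroup (Rs s)) /\
      (forall x, exists n (d : 'I_n -> S) (r : 'I_n -> R),
          (forall i, Rs (d i) (r i)) /\ x = \sum_(i < n) r i) /\
      (forall n (d : 'I_n -> S) (r : 'I_n -> R),
          injective d -> (forall i, Rs (d i) (r i)) ->
          \sum_(i < n) r i = 0 -> forall i, r i = 0) /\
      (forall s t a b, Rs s a -> Rs t b -> Rs (op s t) (mul a b)) /\
      (forall s, op s z = z /\ op z s = z) /\
      (forall x, Rs z x -> x = 0) /\
      (forall s, s <> z -> exists x, Rs s x /\ x <> 0).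

Definition homogeneous (R : zmodType) (S : Type) (Rs : S -> R -> Prop) (x : R) : Prop :=
  exists s, Rs s x.

Definition cancellative (S : Type) (op : S -> S -> S) (z : S) : Prop :=
  forall s t u, (op s u <> z -> op s u = op t u -> s = t) /\
                (op u s <> z -> op u s = op u t -> s = t).

Definition graded_vN_regular (R : zmodType) (mul : R -> R -> R)
  (S : Type) (Rs : S -> R -> Prop) : Prop :=
  forall x, homogeneous Rs x -> exists r, x = mul (mul x r) x.

From mathcomp Require Import all_boot all_algebra boolp.
Set Implicit Arguments. Unset Strict Implicit. Unset Printing Implicit Defensive.
Import GRing.Theory.
Local Open Scope ring_scope.

(** Write [x = x r x] with [x] of degree [s] and split [r] into homogeneous
    components [r_i] of degree [d_i].  Then [x = sum_i x r_i x] with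
    [x r_i x] of degree [s d_i s], so comparing components of degree [s] gives
    [x = x y x] with [y] the sum of the [r_i] for which [s d_i s = s].  By
    cancellativity all these [d_i] coincide (when [s] is not the zero of [S]),
    so [y] is homogeneous. *)

Lemma big_option (R : Type) (idx : R) (op : Monoid.com_law idx) (I : finType)
    (F : option I -> R) :
  \big[op/idx]_(o : option I) F o = op (F None) (\big[op/idx]_(i : I) F (Some i)).
Proof.
rewrite (bigD1 None) //= (reindex_omap Some id) => [|[]//].
by congr (op _ _); apply: eq_bigl => i; rewrite /= eqxx.
Qed.

Section AdditiveSubgroup.
Variables (R : zmodType) (A : R -> Prop).
Hypothesis subA : add_subgroup A.

Lemma add_subgroup0 : A 0.
Proof. exact: subA.1. Qed.

Lemma add_subgroupN x : A x -> A (- x).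
Proof. by move=> Ax; rewrite -sub0r; apply: subA.2 => //; apply: add_subgroup0. Qed.

Lemma add_subgroupD x y : A x -> A y -> A (x + y).
Proof. by move=> Ax Ay; rewrite -[y]opprK; apply: subA.2 => //; apply: add_subgroupN. Qed.

Lemma add_subgroup_sum (I : Type) (r : seq I) (P : pred I) (F : I -> R) :
  (forall i, P i -> A (F i)) -> A (\sum_(i <- r | P i) F i).
Proof.
by move=> AF; apply: big_ind => //; [apply: add_subgroup0 | apply: add_subgroupD].
Qed.

End AdditiveSubgroup.

Section NonUnitalRing.
Variables (R : zmodType) (mul : R -> R -> R).
Hypothesis ring : nu_ring mul.

Lemma nu_mul0r x : mul 0 x = 0.
Proof. by apply: (addrI (mul 0 x)); rewrite -ring.2.1 !addr0. Qed.

Lemma nu_mulr0 x : mul x 0 = 0.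
Proof. by apply: (addrI (mul x 0)); rewrite -ring.2.2 !addr0. Qed.

Lemma nu_mulr_suml (I : Type) (r : seq I) (P : pred I) (F : I -> R) a :
  mul (\sum_(i <- r | P i) F i) a = \sum_(i <- r | P i) mul (F i) a.
Proof. exact: (big_morph (mul^~ a) (fun u v => ring.2.1 u v a) (nu_mul0r a)). Qed.

Lemma nu_mulr_sumr (I : Type) (r : seq I) (P : pred I) (F : I -> R) a :
  mul a (\sum_(i <- r | P i) F i) = \sum_(i <- r | P i) mul a (F i).
Proof. exact: (big_morph (mul a) (ring.2.2 a) (nu_mulr0 a)). Qed.

End NonUnitalRing.

Section Fibers.
Variables (S : Type) (I : finType) (e : I -> S).

Definition fiber_rep i := odflt i [pick j | `[< e j = e i >]].

Lemma fiber_rep_deg i : e (fiber_rep i) = e i.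
Proof. by rewrite /fiber_rep; case: pickP => [j /asboolP|]. Qed.

Lemma fiber_rep_eq i j : e i = e j -> fiber_rep i = fiber_rep j.
Proof.
move=> eij; rewrite /fiber_rep eij; case: pickP => // P0.
by have := P0 j; rewrite asboolT.
Qed.

Lemma fiber_repK i : fiber_rep (fiber_rep i) = fiber_rep i.
Proof. exact/fiber_rep_eq/fiber_rep_deg. Qed.

End Fibers.

Section DirectSum.
Variables (R : zmodType) (S : Type) (Rs : S -> R -> Prop).
Hypothesis Rs_subgroup : forall s, add_subgroup (Rs s).
Hypothesis Rs_independent : forall n (d : 'I_n -> S) (r : 'I_n -> R),
  injective d -> (forall i, Rs (d i) (r i)) ->
  \sum_(i < n) r i = 0 -> forall i, r i = 0.

Lemma sum_distinct_degrees_eq0 (I : finType) (P : pred I) (d : I -> S) (r : I -> R) :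
  {in P &, injective d} -> (forall i, P i -> Rs (d i) (r i)) ->
  \sum_(i | P i) r i = 0 -> forall i, P i -> r i = 0.
Proof.
move=> d_inj r_hom; rewrite (big_enum_val (A := P)) => r_sum i Pi.
rewrite -(enum_rankK_in Pi Pi).
apply: (@Rs_independent _ (d \o enum_val) (r \o enum_val) _ _ r_sum) => [k l|k] /=.
  by move/d_inj => /(_ (enum_valP k) (enum_valP l)); apply: enum_val_inj.
exact/r_hom/enum_valP.
Qed.

Lemma sum_degree_eq0 (I : finType) (e : I -> S) (a : I -> R) (P : pred I) u :
  (forall i, reflect (e i = u) (P i)) -> (forall i, Rs (e i) (a i)) ->
  \sum_i a i = 0 -> \sum_(i | P i) a i = 0.
Proof.
move=> eP a_hom a_sum; pose rep := fiber_rep e.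
(* Grouping the terms by degree, indexed by the fiber representatives,
   gives a zero sum of terms of pairwise distinct degrees. *)
pose b j := \sum_(i | rep i == j) a i.
have b0 j : rep j == j -> b j = 0.
  apply: (@sum_distinct_degrees_eq0 _ (fun j => rep j == j) e) => //.
  - by move=> k l /eqP kk /eqP ll /fiber_rep_eq; rewrite -/rep kk ll.
  - by move=> k _; apply: add_subgroup_sum => // i /eqP <-; rewrite fiber_rep_deg.
  - rewrite -[RHS]a_sum [RHS](partition_big rep (fun j => rep j == j)) //.
    by move=> i _; rewrite /rep fiber_repK.
case: (pickP P) => [i0 Pi0|P0]; last by rewrite big_pred0.
rewrite (eq_bigl (fun i => rep i == rep i0)) => [|i].
  by apply: b0; rewrite /rep fiber_repK.
apply/eP/eqP => [ei|rep_i]; first by apply: fiber_rep_eq; rewrite ei; apply/esym/eP.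
by rewrite -fiber_rep_deg -/rep rep_i fiber_rep_deg; apply/eP.
Qed.

Lemma homogeneous_sum_component (I : finType) (e : I -> S) (b : I -> R)
    (P : pred I) s x :
  (forall i, reflect (e i = s) (P i)) -> Rs s x ->
  (forall i, Rs (e i) (b i)) -> x = \sum_i b i -> x = \sum_(i | P i) b i.
Proof.
move=> eP xs b_hom x_sum.
pose e' o := if o is Some i then e i else s.
pose a o := if o is Some i then - b i else x.
pose P' o := if o is Some i then P i else true.
suff: \sum_(o | P' o) a o = 0.
  by rewrite big_mkcond big_option /= -big_mkcond sumrN => /subr0_eq.
apply: (@sum_degree_eq0 _ e' a P' s).
- by case=> [i|]; [apply: eP | constructor].
- by case=> [i|] //=; apply: add_subgroupN (b_hom i).
- by rewrite big_option /= sumrN -x_sum subrr.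
Qed.

End DirectSum.

Lemma cancellative_sandwich (S : Type) (op : S -> S -> S) (z : S) s t t' :
  cancellative op z -> (forall u, op z u = z) -> s <> z ->
  op (op s t) s = s -> op (op s t') s = s -> t = t'.
Proof.
move=> canc zu snz sts st's.
have st_nz : op s t <> z by move=> stz; apply: snz; rewrite -sts stz zu.
apply: (canc _ _ s).2 => //; apply: (canc _ _ s).1; first by rewrite sts.
by rewrite sts st's.
Qed.

Section GradedRing.
Variables (R : zmodType) (mul : R -> R -> R) (S : Type) (op : S -> S -> S) (z : S)
  (Rs : S -> R -> Prop).
Hypothesis ring : nu_ring mul.
Hypothesis Rs_subgroup : forall s, add_subgroup (Rs s).
Hypothesis Rs_decomposition : forall x, exists n (d : 'I_n -> S) (r : 'I_n -> R),
  (forall i, Rs (d i) (r i)) /\ x = \sum_(i < n) r i.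
Hypothesis Rs_independent : forall n (d : 'I_n -> S) (r : 'I_n -> R),
  injective d -> (forall i, Rs (d i) (r i)) ->
  \sum_(i < n) r i = 0 -> forall i, r i = 0.
Hypothesis Rs_mul : forall s t a b, Rs s a -> Rs t b -> Rs (op s t) (mul a b).
Hypothesis zero_opl : forall s, op z s = z.
Hypothesis Rs_z : forall x, Rs z x -> x = 0.
Hypothesis op_cancellative : cancellative op z.

Lemma homogeneous_inner_inverse x r :
  homogeneous Rs x -> x = mul (mul x r) x ->
  exists y, homogeneous Rs y /\ x = mul (mul x y) x.
Proof.
move=> [s xs] xrx; have [sz|snz] := pselect (s = z).
  exists 0; split; first by exists z; apply: add_subgroup0.
  by rewrite sz in xs; rewrite (Rs_z xs) !nu_mul0r.
have [n [d [ri [ri_hom r_sum]]]] := Rs_decomposition r.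
pose P i := `[< op (op s (d i)) s = s >].
exists (\sum_(i | P i) ri i); split.
  case: (pickP P) => [i0 Pi0|P0]; last first.
    by exists s; rewrite big_pred0 //; apply: add_subgroup0.
  exists (d i0); apply: add_subgroup_sum => // i Pi.
  rewrite (cancellative_sandwich op_cancellative zero_opl snz
    (asboolW Pi0) (asboolW Pi)).
  exact: ri_hom.
rewrite (nu_mulr_sumr ring) (nu_mulr_suml ring).
apply: (@homogeneous_sum_component _ _ _ Rs_subgroup Rs_independent _
  (fun i => op (op s (d i)) s) _ _ s) => [i|//|i|]; first exact: asboolP.
  by apply: Rs_mul => //; apply: Rs_mul.
by rewrite {1}xrx r_sum (nu_mulr_sumr ring) (nu_mulr_suml ring).
Qed.

End GradedRing.

Theorem proposition4p2 (R : zmodType) (mul : R -> R -> R)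
  (S : Type) (op : S -> S -> S) (z : S) (Rs : S -> R -> Prop) :
  graded_ring_inducing mul op z Rs -> cancellative op z ->
  (graded_vN_regular mul Rs <->
   forall x, homogeneous Rs x ->
     exists y, homogeneous Rs y /\ x = mul (mul x y) x).
Proof.
move=> [ring [sub [dec [indep [homul [zs [z0 _]]]]]]] canc.
split=> [regular x hx | regular_in_H x hx].
  have [r xrx] := regular x hx.
  exact: (homogeneous_inner_inverse ring sub dec indep homul
           (fun s => (zs s).2) z0 canc hx xrx).
by have [y [_ xyx]] := regular_in_H x hx; exists y.
Qed.
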